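(* Let $P$ be a special product rule, $\Sigma$ a finite alphabet, $\mathcal A=\langle X,F,\Delta\rangle$ a polynomial $P$-automaton with finite $X$, $x_1\in X$, and let $I_n$ ($n\in\mathbb N$) be the ideal of $\mathbb Q[X]$ generated by $\{\tilde\Delta_wx_1:|w|\le n\}$. Let $N\in\mathbb N$ be such that $I_N=I_{N+1}=I_{N+2}=\cdots$. Then $[\![x_1]\!]_{\mathcal A}=\mathbb 0$ if and only if $([\![x_1]\!]_{\mathcal A})_w=0$ for all words $w\in\Sigma^*$ of length at most $N$.
   Context: Let $\Sigma^*$ be the finite words over $\Sigma$ with empty word $\varepsilon$. A series is $f:\Sigma^*\to\mathbb Q$, $f_w=f(w)$; $\mathbb 0$ is the zero series; $\delta_af$ ($a\in\Sigma$) is $w\mapsto f(aw)$. $\mathbb Q_0[X]$ is the set of polynomials of $\mathbb Q[X]$ with zero constant term. Terms over $X$ are generated by $u,v::=x\mid 0\mid c\cdot u\mid u+v\mid u*v$; a product rule is a term $P$ over $\{x,\dot x,y,\dot y\}$; $u\approx v$ iff $u,v$ denote the same polynomial. $P$ is special if $P(x+y,\dot x+\dot y,z,\dot z)\approx P(x,\dot x,z,\dot z)+P(y,\dot y,z,\dot z)$, $P(x,\dot x,y*z,P(y,\dot y,z,\dot z))\approx P(x*y,P(x,\dot x,y,\dot y),z,\dot z)$, $P(x,\dot x,y,\dot y)\approx P(y,\dot y,x,\dot x)$. For special $P$, every $D:X\to\mathbb Q_0[X]$ has a unique $\mathbb Q$-linear extension $\tilde D$ to $\mathbb Q_0[X]$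 with $\tilde Dx=Dx$ and $\tilde D(\alpha\beta)=P(\alpha,\tilde D\alpha,\beta,\tilde D\beta)$. A polynomial $P$-automaton is $\mathcal A=\langle X,F,\Delta\rangle$ with $F:X\to\mathbb Q$ and $\Delta_a:X\to\mathbb Q_0[X]$; $F$ extends to $\mathbb Q_0[X]$ by evaluation; $\tilde\Delta_\varepsilon\alpha=\alpha$, $\tilde\Delta_{aw}\alpha=\tilde\Delta_w\tilde\Delta_a\alpha$; $[\![\alpha]\!]_{\mathcal A}$ is the series $w\mapsto F(\tilde\Delta_w\alpha)$. *)

From HB Require Import structures.
From mathcomp Require Import all_boot all_order all_algebra.
From mathcomp Require Import mpoly.
Set Implicit Arguments. Unset Strict Implicit. Unset Printing Implicit Defensive.
Import Order.TTheory GRing.Theory Num.Theory.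
Local Open Scope ring_scope.

Inductive term (V : Type) : Type :=
  | TVar of V
  | TZero
  | TScale of rat & term V
  | TAdd of term V & term V
  | TMul of term V & term V.

Fixpoint eval_term (V : Type) (k : nat) (s : V -> {mpoly rat[k]}) (t : term V)
  : {mpoly rat[k]} :=
  match t with
  | TVar x => s x
  | TZero => 0
  | TScale c u => c *: eval_term s u
  | TAdd u v => eval_term s u + eval_term s v
  | TMul u v => eval_term s u * eval_term s v
  end.

(* A product rule: a term over {x, x', y, y'}, encoded as 'I_4 in this order. *)
Definition prod_rule := term 'I_4.

Definition appP (k : nat) (P : prod_rule) (a a' b b' : {mpoly rat[k]}) :=
  eval_term (fun i : 'I_4 => [:: a; a'; b; b']`_i) P.

(* Six formal variables x, x', y, y', z, z' (for stating ≈). *)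
Definition V6 (i : nat) : {mpoly rat[6]} := 'X_(inord i).

(* P is special: the three polynomial identities (≈ = same polynomial). *)
Definition special (P : prod_rule) : Prop :=
  [/\ appP P (V6 0 + V6 2) (V6 1 + V6 3) (V6 4) (V6 5)
        = appP P (V6 0) (V6 1) (V6 4) (V6 5) + appP P (V6 2) (V6 3) (V6 4) (V6 5),
      appP P (V6 0) (V6 1) (V6 2 * V6 4) (appP P (V6 2) (V6 3) (V6 4) (V6 5))
        = appP P (V6 0 * V6 2) (appP P (V6 0) (V6 1) (V6 2) (V6 3)) (V6 4) (V6 5)
    & appP P (V6 0) (V6 1) (V6 2) (V6 3) = appP P (V6 2) (V6 3) (V6 0) (V6 1)].

Definition zero_const (k : nat) (p : {mpoly rat[k]}) : Prop := p@_0%MM = 0.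

Definition P_extension (k : nat) (P : prod_rule) (D : 'I_k -> {mpoly rat[k]})
  (tD : {mpoly rat[k]} -> {mpoly rat[k]}) : Prop :=
  [/\ forall (c : rat) (a b : {mpoly rat[k]}), zero_const a -> zero_const b ->
        tD (c *: a + b) = c *: tD a + tD b,
      forall i : 'I_k, tD 'X_i = D i
    & forall a b : {mpoly rat[k]}, zero_const a -> zero_const b ->
        tD (a * b) = appP P a (tD a) b (tD b)].

(* tDelta_eps a = a,  tDelta_{aw} a = tDelta_w (tDelta_a a). *)
Definition ext_word (Sigma : Type) (k : nat)
  (tD : Sigma -> {mpoly rat[k]} -> {mpoly rat[k]}) (w : seq Sigma)
  (p : {mpoly rat[k]}) : {mpoly rat[k]} :=
  foldl (fun q a => tD a q) p w.

Definition semantics (Sigma : Type) (k : nat) (F : 'I_k -> rat)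
  (tD : Sigma -> {mpoly rat[k]} -> {mpoly rat[k]}) (p : {mpoly rat[k]})
  (w : seq Sigma) : rat :=
  (ext_word tD w p).@[F].

Definition in_ideal (k : nat) (S : {mpoly rat[k]} -> Prop) (p : {mpoly rat[k]})
  : Prop :=
  exists r : seq ({mpoly rat[k]} * {mpoly rat[k]}),
    (forall cg, cg \in r -> S cg.2) /\ p = \sum_(cg <- r) cg.1 * cg.2.

Definition I_n (Sigma : Type) (k : nat)
  (tD : Sigma -> {mpoly rat[k]} -> {mpoly rat[k]}) (x1 : 'I_k) (n : nat)
  : {mpoly rat[k]} -> Prop :=
  in_ideal (fun q => exists w : seq Sigma, (size w <= n)%N /\ q = ext_word tD w 'X_x1).

From HB Require Import structures.
From mathcomp Require Import all_boot all_order all_algebra.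
From mathcomp Require Import mpoly.
Import GRing.Theory.
Local Open Scope ring_scope.

(* Evaluation at F is a ring morphism, so it kills an ideal as soon as it kills
   its generators.  Every tDelta_w x1 lies in I_(|w|) = I_N, whose generators
   are the tDelta_w x1 with |w| <= N, i.e. the words on which the semantics is
   assumed to vanish. *)

Lemma in_ideal_gen (k : nat) (S : {mpoly rat[k]} -> Prop) (p : {mpoly rat[k]}) :
  S p -> in_ideal S p.
Proof.
move=> Sp; exists [:: (1, p)]; split; last by rewrite big_seq1 mul1r.
by move=> cg; rewrite inE => /eqP ->.
Qed.

Lemma meval_in_ideal_eq0 (k : nat) (S : {mpoly rat[k]} -> Prop)
    (F : 'I_k -> rat) (p : {mpoly rat[k]}) :
  (forall q, S q -> q.@[F] = 0) -> in_ideal S p -> p.@[F] = 0.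
Proof.
move=> S0 [r [rS ->]].
rewrite (big_morph _ (mevalD F) (meval0 F)) big_seq big1 // => cg /rS Scg.
by rewrite mevalM (S0 _ Scg) mulr0.
Qed.

Lemma ext_word_in_I_n {Sigma : Type} {k : nat}
    (tD : Sigma -> {mpoly rat[k]} -> {mpoly rat[k]}) (x1 : 'I_k) (w : seq Sigma) :
  I_n tD x1 (size w) (ext_word tD w 'X_x1).
Proof. by apply: in_ideal_gen; exists w. Qed.

(* Specialness of P and the P-extension property only serve to guarantee that
   such an N exists; the decision procedure itself needs just the ideal
   stabilization. *)
Theorem mainTheorem14
  (P : prod_rule) (Sigma : finType) (k : nat)
  (F : 'I_k -> rat) (Delta : Sigma -> 'I_k -> {mpoly rat[k]})
  (tDelta : Sigma -> {mpoly rat[k]} -> {mpoly rat[k]})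
  (x1 : 'I_k) (N : nat) :
  special P ->
  (forall (a : Sigma) (i : 'I_k), zero_const (Delta a i)) ->
  (forall a : Sigma, P_extension P (Delta a) (tDelta a)) ->
  (forall m : nat, (N <= m)%N ->
     forall p, I_n tDelta x1 m p <-> I_n tDelta x1 N p) ->
  ((forall w : seq Sigma, semantics F tDelta 'X_x1 w = 0) <->
   (forall w : seq Sigma, (size w <= N)%N -> semantics F tDelta 'X_x1 w = 0)).
Proof.
move=> _ _ _ stable; split=> [sem0 w _ | semN w]; first exact: sem0.
have [le_wN | lt_Nw] := leqP (size w) N; first exact: semN.
have w_in_IN := (stable _ (ltnW lt_Nw) _).1 (ext_word_in_I_n tDelta x1 w).
apply: meval_in_ideal_eq0 w_in_IN => _ [u [le_uN ->]].
exact: semN.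
Qed.
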